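(* Fix $\epsilon_0>0$, $c>0$, $h\in[k]$, and suppose $n\alpha\ge c\log n$. Then there is an event $\mathcal{E}^{\mathrm{con}}_{\epsilon_0}$ with $\mathbb{P}[\mathcal{E}^{\mathrm{con}}_{\epsilon_0}]\ge 1-kn^{-c/4}$ on which, for every $g\in[k]$ with $g\neq h$, $$\sum_{i\in T_g^*}\mathbf{1}\Big\{\epsilon_0^2\|\theta_g-\theta_h\|^2\le\langle w_i,\theta_h-\theta_g\rangle\Big\}\ \le\ \frac{5n_g^*}{2\epsilon_0^4(\Delta/\sigma)^2}.$$
   Context: Model: $Y_i=\theta_{z_i}+w_i$, $i=1,\dots,n$, with $z\in[k]^n$, centroids $\theta_1,\dots,\theta_k\in\mathbb{R}^d$, and $w_1,\dots,w_n$ independent zero-mean sub-Gaussian vectors with parameter $\sigma>0$, i.e. $\mathbb{E}[e^{\langle a,w_i\rangle}]\le e^{\sigma^2\|a\|^2/2}$ for all $a\in\mathbb{R}^d$. $T_g^*=\{i\in[n]:z_i=g\}$, $n_g^*=|T_g^*|$, $\alpha=\min_g n_g^*/n$, $\Delta=\min_{g\ne h}\|\theta_g-\theta_h\|$ (Euclidean norm). *)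

From HB Require Import structures.
From mathcomp Require Import all_boot all_order all_algebra.
From mathcomp Require Import all_classical all_reals all_analysis.
Set Implicit Arguments. Unset Strict Implicit. Unset Printing Implicit Defensive.
Import Order.TTheory GRing.Theory Num.Theory.
Local Open Scope classical_set_scope.
Local Open Scope ring_scope.

Definition dotp {R : realType} {d : nat} (u v : 'I_d -> R) : R :=
  \sum_(j < d) u j * v j.
Definition enorm {R : realType} {d : nat} (u : 'I_d -> R) : R :=
  Num.sqrt (dotp u u).
Definition vsub {R : realType} {d : nat} (u v : 'I_d -> R) : 'I_d -> R :=
  fun j => u j - v j.

Definition clsize {n k : nat} (z : 'I_n -> 'I_k) (g : 'I_k) : nat :=
  #|[pred i | z i == g]|.

(* alpha = min_g n_g^*/n  (the default 1 is an upper bound of every n_g/n) *)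
Definition alpha_min {R : realType} {n k : nat} (z : 'I_n -> 'I_k) : R :=
  \big[Num.min/1]_(g < k) ((clsize z g)%:R / n%:R).

(* Delta = min_{g<>h} ||theta_g - theta_h||; the default value is the maximal
   pairwise distance, so this is exactly the minimum whenever k >= 2. *)
Definition maxsep {R : realType} {d k : nat} (theta : 'I_k -> 'I_d -> R) : R :=
  \big[Num.max/0]_(gh : 'I_k * 'I_k) enorm (vsub (theta gh.1) (theta gh.2)).
Definition Delta_sep {R : realType} {d k : nat} (theta : 'I_k -> 'I_d -> R) : R :=
  \big[Num.min/maxsep theta]_(gh : 'I_k * 'I_k | gh.1 != gh.2)
     enorm (vsub (theta gh.1) (theta gh.2)).

Definition gen_sigma {dT : measure_display} {Omega : measurableType dT}
  {R : realType} {d : nat} (X : Omega -> 'I_d -> R) : set (set Omega) :=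
  <<s [set A | exists j : 'I_d, exists B : set R,
        measurable B /\ A = (fun x => X x j) @^-1` B] >>.

Definition mutually_independent {dT : measure_display} {Omega : measurableType dT}
  {R : realType} (P : probability Omega R) {n d : nat}
  (w : 'I_n -> Omega -> 'I_d -> R) : Prop :=
  forall (J : {set 'I_n}) (A : 'I_n -> set Omega),
    (forall i, i \in J -> gen_sigma (w i) (A i)) ->
    P (\bigcap_(i in [set` mem J]) A i) = (\prod_(i in J) P (A i))%E.

Definition zero_mean_subgaussian {dT : measure_display} {Omega : measurableType dT}
  {R : realType} (P : probability Omega R) {d : nat}
  (X : Omega -> 'I_d -> R) (sigma : R) : Prop :=
  (forall j : 'I_d, measurable_fun setT (fun x => X x j)) /\
  (forall j : 'I_d, P.-integrable setT (fun x => (X x j)%:E) /\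
        (\int[P]_x (X x j)%:E = 0)%E) /\
  (forall a : 'I_d -> R,
     (\int[P]_x (expR (dotp a (X x)))%:E
        <= (expR (sigma ^+ 2 * (enorm a) ^+ 2 / 2))%:E)%E).

(* For [g != h], the events [eps0^2 |theta_g - theta_h|^2 <= <w_i, theta_h - theta_g>], i in
   T_g, are independent and, by the sub-Gaussian Chernoff bound, each has probability at most
   [p = exp (- eps0^4 Delta^2 / (2 sigma^2))].  If at least [m] of them occur then all events
   of some [m]-subset of T_g occur, so the union bound over subsets gives probability at most
   [2 ^ n_g * p ^ m].  Taking [m] just above the claimed bound makes this at most
   [exp (- n_g / 4) <= n ^ (- c / 4)], since [n_g >= n alpha >= c ln n]; a last union bound
   over the [k] clusters yields the event. *)

From HB Require Import structures.
From mathcomp Require Import all_boot all_order all_algebra.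
From mathcomp Require Import all_classical all_reals all_analysis.
From mathcomp Require Import ring lra.
Set Implicit Arguments. Unset Strict Implicit. Unset Printing Implicit Defensive.
Import Order.TTheory GRing.Theory Num.Theory.
Local Open Scope classical_set_scope.
Local Open Scope ring_scope.

Section EuclideanVectors.
Variables (R : realType) (d : nat).
Implicit Types (u v : 'I_d -> R) (l : R).

Lemma dotpC u v : dotp u v = dotp v u.
Proof. by apply: eq_bigr => j _; rewrite mulrC. Qed.

Lemma dotpZl l u v : dotp (fun j => l * u j) v = l * dotp u v.
Proof. by rewrite /dotp mulr_sumr; apply: eq_bigr => j _; rewrite mulrA. Qed.

Lemma dotpp_ge0 u : 0 <= dotp u u.
Proof. by apply: sumr_ge0 => j _; rewrite -expr2 sqr_ge0. Qed.

Lemma sqr_enorm u : enorm u ^+ 2 = dotp u u.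
Proof. by rewrite sqr_sqrtr // dotpp_ge0. Qed.

Lemma enorm_vsubC u v : enorm (vsub u v) = enorm (vsub v u).
Proof.
by congr Num.sqrt; apply: eq_bigr => j _; rewrite /vsub -mulrNN !opprB.
Qed.

End EuclideanVectors.

Section RandomVectors.
Variables (R : realType) (dT : measure_display) (Omega : measurableType dT).
Variables (d : nat) (X : Omega -> 'I_d -> R).

Lemma measurable_fun_dotp (a : 'I_d -> R) :
  (forall j, measurable_fun setT (fun x => X x j)) ->
  measurable_fun setT (fun x => dotp (X x) a).
Proof.
move=> mX; apply: measurable_sum => j.
exact: measurable_realfun.measurable_funM.
Qed.

Lemma measurable_dotp_ge (a : 'I_d -> R) (s : R) :
  (forall j, measurable_fun setT (fun x => X x j)) ->
  measurable [set x | s <= dotp (X x) a].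
Proof.
move=> mX; have := measurable_fun_dotp a mX measurableT (measurable_itv `[s, +oo[).
rewrite setTI; congr measurable.
by apply/seteqP; split=> x /=; rewrite in_itv /= andbT.
Qed.

End RandomVectors.

Lemma gen_sigma_dotp_ge (R : realType) (dT : measure_display)
  (Omega : measurableType dT) (d : nat) (X : Omega -> 'I_d -> R)
  (a : 'I_d -> R) (s : R) :
  gen_sigma X [set x | s <= dotp (X x) a].
Proof.
apply: (@measurable_dotp_ge R _ (g_sigma_algebraType _)) => j _ B mB.
by rewrite setTI; apply: sub_sigma_algebra; exists j, B.
Qed.

Section SubgaussianTail.
Variables (R : realType) (dT : measure_display) (Omega : measurableType dT).
Variables (P : probability Omega R) (d : nat) (X : Omega -> 'I_d -> R) (sigma : R).
Hypothesis X_subg : zero_mean_subgaussian P X sigma.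

Lemma subgaussian_chernoff (a : 'I_d -> R) (s lam : R) : 0 < lam ->
  (P [set x | (s <= dotp (X x) a)%R] <=
    (expR (sigma ^+ 2 * (lam ^+ 2 * enorm a ^+ 2) / 2 - lam * s))%:E)%E.
Proof.
move=> lam_gt0; have [mX [_ mgf_le]] := X_subg.
have mY : (fun x => dotp (X x) a) \in mfun.
  by rewrite inE; exact: measurable_fun_dotp.
apply: le_trans (chernoff (mfun_Sub mY : {RV P >-> R}) s lam_gt0) _.
rewrite /mmt_gen_fun expectation.unlock /= expRD EFinM.
apply: lee_wpmul2r; first by rewrite lee_fin expR_ge0.
have -> : (\int[P]_x (expR (dotp (X x) a * lam))%:E =
           \int[P]_x (expR (dotp (fun j => lam * a j) (X x)))%:E)%E.
  by apply: eq_integral => x _; rewrite dotpZl dotpC mulrC.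
apply: le_trans (mgf_le _) _.
by rewrite !sqr_enorm dotpZl dotpC dotpZl [lam * (lam * _)]mulrA -expr2.
Qed.

(* Chernoff bound at the optimal [lam = s / (sigma^2 |a|^2)]. *)
Lemma subgaussian_tail (a : 'I_d -> R) (s : R) :
  0 < sigma -> 0 < s -> 0 < enorm a ->
  (P [set x | (s <= dotp (X x) a)%R] <=
    (expR (- (s ^+ 2 / (2 * sigma ^+ 2 * enorm a ^+ 2))))%:E)%E.
Proof.
move=> sigma_gt0 s_gt0 a_gt0.
have lam_gt0 : 0 < s / (sigma ^+ 2 * enorm a ^+ 2).
  by rewrite divr_gt0 // mulr_gt0 // exprn_gt0.
apply: le_trans (subgaussian_chernoff a s lam_gt0) _.
rewrite lee_fin ler_expR le_eqVlt; apply/orP; left; apply/eqP.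
by field; rewrite !gt_eqF.
Qed.

End SubgaussianTail.

Lemma le_measure_bigsetU (R : realType) (dT : measure_display)
  (T : measurableType dT) (mu : {measure set T -> \bar R})
  (I : Type) (r : seq I) (Pr : pred I) (F : I -> set T) :
  (forall i, measurable (F i)) ->
  (mu (\big[setU/set0]_(i <- r | Pr i) F i) <= \sum_(i <- r | Pr i) mu (F i))%E.
Proof.
move=> mF; elim: r => [|a r IHr]; first by rewrite !big_nil measure0.
rewrite !big_cons; case: ifP => _ //.
apply: le_trans (measureU2 _ (mF a) (bigsetU_measurable _ (fun i _ => mF i))) _.
exact: leeD.
Qed.

Section IndependentEvents.
Variables (R : realType) (dT : measure_display) (Omega : measurableType dT).
Variables (P : probability Omega R) (n : nat) (b : 'I_n -> Omega -> bool).
Hypothesis b_meas : forall i, measurable [set x | b i x].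
Hypothesis b_indep : forall J : {set 'I_n},
  P (\bigcap_(i in [set` mem J]) [set x | b i x]) = (\prod_(i in J) P [set x | b i x])%E.

Let all_occur (A : {set 'I_n}) := \bigcap_(i in [set` mem A]) [set x | b i x].

Let measurable_all_occur A : measurable (all_occur A).
Proof.
by apply: fin_bigcap_measurable => [|i _]; [exact: finite_finset|exact: b_meas].
Qed.

Lemma count_ge_bigsetU (T : {set 'I_n}) (m : nat) :
  [set x | (m <= #|[pred i | (i \in T) && b i x]|)%N] =
  \big[setU/set0]_(A : {set 'I_n} | (A \subset T) && (m <= #|A|)%N) all_occur A.
Proof.
rewrite -bigcup_seq_cond; apply/seteqP; split=> x /=.
  move=> m_le; exists [set i in T | b i x]; last by move=> i /=; rewrite inE => /andP[].
  rewrite /= mem_index_enum /=; apply/andP; split.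
    by apply/fintype.subsetP => i; rewrite inE => /andP[].
  by apply: leq_trans m_le (subset_leq_card _); apply/fintype.subsetP => i; rewrite !inE.
move=> [A /andP[_ /andP[sAT m_le]] occA]; apply: leq_trans m_le (subset_leq_card _).
by apply/fintype.subsetP => i iA; rewrite inE (fintype.subsetP sAT i iA); exact: occA.
Qed.

Lemma measurable_count_ge (T : {set 'I_n}) (m : nat) :
  measurable [set x | (m <= #|[pred i | (i \in T) && b i x]|)%N].
Proof. by rewrite count_ge_bigsetU; apply: bigsetU_measurable. Qed.

Lemma prob_all_occur_le (A : {set 'I_n}) (p : R) : 0 <= p ->
  (forall i, i \in A -> P [set x | b i x] <= p%:E)%E ->
  (P (all_occur A) <= (p ^+ #|A|)%:E)%E.
Proof.
move=> p_ge0 Pb_le; rewrite b_indep -prodr_const.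
have finP i : P [set x | b i x] = (fine (P [set x | b i x]))%:E.
  by rewrite fineK // fin_num_measure.
rewrite (eq_bigr _ (fun i _ => finP i)).
rewrite prodEFin lee_fin; apply: ler_prod => i iA.
by rewrite fine_ge0 //= -lee_fin -finP Pb_le.
Qed.

(* Union bound over the [2 ^ #|T|] subsets of [T]. *)
Lemma prob_count_ge (T : {set 'I_n}) (m : nat) (p : R) : 0 <= p <= 1 ->
  (forall i, i \in T -> P [set x | b i x] <= p%:E)%E ->
  (P [set x | (m <= #|[pred i | (i \in T) && b i x]|)%N] <=
    (2 ^+ #|T| * p ^+ m)%:E)%E.
Proof.
move=> /andP[p_ge0 p_le1] Pb_le; rewrite count_ge_bigsetU.
apply: le_trans (le_measure_bigsetU P _ _ measurable_all_occur) _.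
apply: le_trans (@lee_sum _ _ _ (fun _ => (p ^+ m)%:E) _ _ _) _.
  move=> A /andP[sAT m_le].
  apply: le_trans (prob_all_occur_le p_ge0 _) _.
    by move=> i iA; apply: Pb_le; exact: (fintype.subsetP sAT).
  by rewrite lee_fin ler_wiXn2l.
rewrite sumEFin lee_fin big_mkcondr /=.
apply: le_trans (_ : \sum_(A in powerset T) p ^+ m <= _).
  rewrite (eq_bigl (fun A => A \in powerset T)) => [|A]; last by rewrite powersetE.
  by apply: ler_sum => A _; case: ifP; rewrite // exprn_ge0.
by rewrite sumr_const card_powerset -[p ^+ m *+ _]mulr_natl natrX.
Qed.

End IndependentEvents.

Lemma exp2_le_expR (R : realType) (N : nat) : 2 ^+ N <= expR N%:R :> R.
Proof.
rewrite -[N%:R]mulr1 expRM_natl; apply: lerXn2r; rewrite ?nnegrE ?ler0n ?expR_ge0 //.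
by have := expR_ge1Dx (1 : R); rewrite -[1 + 1]/(2%:R).
Qed.

Lemma Delta_sep_le (R : realType) (d k : nat) (theta : 'I_k -> 'I_d -> R) (g h : 'I_k) :
  g != h -> Delta_sep theta <= enorm (vsub (theta g) (theta h)).
Proof. by move=> gh; exact: (bigmin_le_cond _ (j := (g, h))). Qed.

Lemma clsize_le (n k : nat) (z : 'I_n -> 'I_k) (g : 'I_k) : (clsize z g <= n)%N.
Proof. by apply: leq_trans (max_card _) _; rewrite card_ord. Qed.

Lemma le_alpha_min_clsize {R : realType} (n k : nat) (z : 'I_n -> 'I_k) (g : 'I_k) :
  n%:R * alpha_min z <= (clsize z g)%:R :> R.
Proof.
have [n0|n_gt0] := posnP n.
  by rewrite (_ : n%:R = 0) ?mul0r // n0.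
apply: le_trans (ler_wpM2l (ler0n _ n) (bigmin_le _ g _)) _.
by rewrite mulrC divfK // pnatr_eq0 -lt0n.
Qed.

Section CrossingCounts.
Variables (R : realType) (dT : measure_display) (Omega : measurableType dT).
Variables (P : probability Omega R) (n d k : nat).
Variables (z : 'I_n -> 'I_k) (theta : 'I_k -> 'I_d -> R).
Variables (w : 'I_n -> Omega -> 'I_d -> R) (sigma eps0 c : R) (h : 'I_k).
Hypothesis sigma_gt0 : 0 < sigma.
Hypothesis w_subg : forall i, zero_mean_subgaussian P (w i) sigma.
Hypothesis w_indep : mutually_independent P w.
Hypothesis Delta_gt0 : 0 < Delta_sep theta.
Hypothesis eps0_gt0 : 0 < eps0.
Hypothesis size_ge_log : c * ln n%:R <= n%:R * alpha_min z.

Definition crosses (g : 'I_k) (i : 'I_n) (x : Omega) : bool :=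
  eps0 ^+ 2 * (enorm (vsub (theta g) (theta h))) ^+ 2
    <= dotp (w i x) (vsub (theta h) (theta g)).

Definition crossing_bound (g : 'I_k) : R :=
  5 * (clsize z g)%:R / (2 * eps0 ^+ 4 * (Delta_sep theta / sigma) ^+ 2).

Definition cluster (g : 'I_k) : {set 'I_n} := [set i | z i == g]%SET.

Lemma card_cluster (g : 'I_k) : #|cluster g| = clsize z g.
Proof. by apply: eq_card => i; rewrite inE. Qed.

Definition too_many_crossings (g : 'I_k) : set Omega :=
  [set x | ((Num.truncn (crossing_bound g)).+1 <=
            #|[pred i | (i \in cluster g) && crosses g i x]|)%N].

Let crossing_rate : R := eps0 ^+ 4 * Delta_sep theta ^+ 2 / (2 * sigma ^+ 2).

Let crossing_rate_ge0 : 0 <= crossing_rate.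
Proof. by rewrite divr_ge0 ?mulr_ge0 ?exprn_ge0 // ltW. Qed.

Let crossing_bound_ge0 g : 0 <= crossing_bound g.
Proof.
by rewrite /crossing_bound divr_ge0 ?mulr_ge0 ?exprn_ge0 ?invr_ge0 ?ler0n ?ltW.
Qed.

Let measurable_crosses g i : measurable [set x | crosses g i x].
Proof. by have [mw _] := w_subg i; exact: measurable_dotp_ge. Qed.

Lemma prob_crosses_le (g : 'I_k) (i : 'I_n) : g != h ->
  (P [set x | crosses g i x] <= (expR (- crossing_rate))%:E)%E.
Proof.
move=> gh; set e := enorm (vsub (theta g) (theta h)).
have Delta_le_e : Delta_sep theta <= e by exact: Delta_sep_le.
have e_gt0 : 0 < e by apply: lt_le_trans Delta_le_e.
have a_norm : enorm (vsub (theta h) (theta g)) = e by rewrite enorm_vsubC.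
have s_gt0 : 0 < eps0 ^+ 2 * e ^+ 2 by rewrite mulr_gt0 ?exprn_gt0.
apply: le_trans (subgaussian_tail (w_subg i) sigma_gt0 s_gt0 _) _; rewrite a_norm //.
rewrite lee_fin ler_expR lerN2 /crossing_rate.
have -> : (eps0 ^+ 2 * e ^+ 2) ^+ 2 / (2 * sigma ^+ 2 * e ^+ 2) =
          eps0 ^+ 4 * e ^+ 2 / (2 * sigma ^+ 2).
  by field; rewrite !gt_eqF.
rewrite ler_pM2r ?invr_gt0 ?mulr_gt0 ?exprn_gt0 // ler_pM2l ?exprn_gt0 //.
by rewrite ler_sqr // nnegrE ltW.
Qed.

(* As [crossing_rate * crossing_bound g = 5 N / 4], the union bound
   [2 ^ N * exp (- crossing_rate * m) <= exp N * exp (- 5 N / 4)] is at most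
   [exp (- N / 4)], and [N >= c ln n]. *)
Lemma prob_too_many_crossings_le (g : 'I_k) : g != h ->
  (P (too_many_crossings g) <= (n%:R `^ (- (c / 4)))%:E)%E.
Proof.
move=> gh; set N := clsize z g; set m := (Num.truncn (crossing_bound g)).+1.
have count_le_N x : (#|[pred i | (i \in cluster g) && crosses g i x]| <= N)%N.
  by rewrite /N -card_cluster; apply/subset_leq_card/fintype.subsetP => i /andP[].
have [N0|N_gt0] := posnP N.
  rewrite [too_many_crossings g](_ : _ = set0) ?measure0 ?lee_fin ?powR_ge0 //.
  by apply/seteqP; split=> x //= m_le; have := leq_trans m_le (count_le_N x); rewrite N0.
have n_gt0 : (0 < n)%N by apply: leq_trans N_gt0 (clsize_le z g).
have log_le_N : c * ln n%:R <= N%:R.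
  exact: le_trans size_ge_log (le_alpha_min_clsize z g).
have rate_m : 5 * N%:R / 4 <= crossing_rate * m%:R.
  have -> : 5 * N%:R / 4 = crossing_rate * crossing_bound g.
    by rewrite /crossing_rate /crossing_bound; field; rewrite !gt_eqF.
  rewrite ler_pM2l; first by have /andP[_ /ltW] := truncn_itv (crossing_bound_ge0 g).
  by rewrite divr_gt0 ?mulr_gt0 ?exprn_gt0.
have indep (J : {set 'I_n}) :
    P (\bigcap_(i in [set` mem J]) [set x | crosses g i x]) =
    (\prod_(i in J) P [set x | crosses g i x])%E.
  by apply: w_indep => i _; exact: gen_sigma_dotp_ge.
have p01 : 0 <= expR (- crossing_rate) <= 1.
  by rewrite expR_ge0 expR_le1 oppr_le0 crossing_rate_ge0.
apply: le_trans (prob_count_ge (measurable_crosses g) indep m p01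
                 (fun i _ => prob_crosses_le i gh)) _.
rewrite card_cluster lee_fin -expRM_natl mulrN.
apply: le_trans (ler_wpM2r (expR_ge0 _) (exp2_le_expR R N)) _.
rewrite -expRD /powR gt_eqF ?ltr0n // ler_expR.
lra.
Qed.

Lemma measurable_too_many_crossings (g : 'I_k) : measurable (too_many_crossings g).
Proof. exact: measurable_count_ge. Qed.

Lemma prob_some_too_many_crossings_le :
  (P (\big[setU/set0]_(g | g != h) too_many_crossings g) <=
    (k%:R * n%:R `^ (- (c / 4)))%:E)%E.
Proof.
apply: le_trans (le_measure_bigsetU _ _ _ measurable_too_many_crossings) _.
apply: le_trans (lee_sum _ prob_too_many_crossings_le) _.
rewrite sumEFin lee_fin big_mkcond /=.
apply: le_trans (_ : \sum_(g < k) n%:R `^ (- (c / 4)) <= _).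
  by apply: ler_sum => g _; case: ifP; rewrite ?powR_ge0.
by rewrite sumr_const card_ord mulr_natl.
Qed.

Lemma count_crossings_le (g : 'I_k) (x : Omega) : ~ too_many_crossings g x ->
  (#|[pred i | (z i == g) && crosses g i x]|)%:R <= crossing_bound g.
Proof.
move=> /negP; rewrite -ltnNge ltnS => count_le.
apply: le_trans (_ : (Num.truncn (crossing_bound g))%:R <= _).
  rewrite ler_nat (leq_trans _ count_le) //.
  by apply/subset_leq_card/fintype.subsetP => i; rewrite !inE.
by have /andP[] := truncn_itv (crossing_bound_ge0 g).
Qed.

End CrossingCounts.

Lemma prob_setC_ge (R : realType) (dT : measure_display) (Omega : measurableType dT)
  (P : probability Omega R) (A : set Omega) (r : R) :
  measurable A -> (P A <= r%:E)%E -> ((1 - r)%:E <= P (~` A))%E.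
Proof.
move=> mA PA_le; rewrite probability_setC // -(fineK (fin_num_measure P _ mA)).
by rewrite -EFinB lee_fin lerD2l lerN2 -lee_fin fineK // fin_num_measure.
Qed.

Theorem mainTheorem4 (R : realType) (dT : measure_display) (Omega : measurableType dT)
  (P : probability Omega R) (n d k : nat)
  (z : 'I_n -> 'I_k) (theta : 'I_k -> 'I_d -> R)
  (w : 'I_n -> Omega -> 'I_d -> R) (sigma eps0 c : R) (h : 'I_k) :
  0 < sigma ->
  (forall i, zero_mean_subgaussian P (w i) sigma) ->
  mutually_independent P w ->
  0 < Delta_sep theta ->
  0 < eps0 -> 0 < c ->
  n%:R * alpha_min z >= c * ln n%:R ->
  exists E : set Omega,
    measurable E /\
    (P E >= (1 - k%:R * (n%:R `^ (- (c / 4))))%:E)%E /\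
    (forall x, E x ->
       forall g : 'I_k, g != h ->
         (#|[pred i | (z i == g) &&
             (eps0 ^+ 2 * (enorm (vsub (theta g) (theta h))) ^+ 2
                <= dotp (w i x) (vsub (theta h) (theta g)))]|)%:R
         <= 5 * (clsize z g)%:R
              / (2 * eps0 ^+ 4 * (Delta_sep theta / sigma) ^+ 2)).
Proof.
move=> sigma_gt0 w_subg w_indep Delta_gt0 eps0_gt0 _ size_ge_log.
pose U := \big[setU/set0]_(g | g != h) too_many_crossings z theta w sigma eps0 h g.
have mU : measurable U.
  by apply: bigsetU_measurable => g _; exact: measurable_too_many_crossings.
exists (~` U); split; first exact: measurableC.
split; first exact/prob_setC_ge/(prob_some_too_many_crossings_le h sigma_gt0).
move=> x Ux g gh; apply: (count_crossings_le sigma_gt0) => // too_many; apply: Ux.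
by rewrite /U -bigcup_seq_cond; exists g => //=; rewrite mem_index_enum.
Qed.
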